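(* Let $m=1$, $n,T\in\mathbb{N}$, $L\in[1,T]$ with $n+L\le T$, $u_{[0,T-1]}\in\mathbb{R}^T$, and let $\eta=\begin{bmatrix}\eta_0&\cdots&\eta_{n+L-1}\end{bmatrix}^\top\in\mathbb{R}^{n+L}\setminus\{0\}$ satisfy $\eta^\top\mathcal{H}_{n+L}(u_{[0,T-1]})=0$. Define $\Lambda(\eta)=\{\lambda\in\mathbb{C}:\sum_{i=0}^{n+L-1}\lambda^i\eta_i=0\}$. Then for every $A\in\mathbb{R}^{n\times n}$ with $\operatorname{spec}A\cap\Lambda(\eta)=\varnothing$ and every $B\in\mathbb{R}^{n}$, there exists a state sequence $x_{[0,T-L]}$ satisfying $x(t+1)=Ax(t)+Bu(t)$ for all $t\in[0,T-L-1]$ such that $$\operatorname{rank}\begin{bmatrix}\mathcal{H}_L(u_{[0,T-1]})\\ \mathcal{H}_1(x_{[0,T-L]})\end{bmatrix}<n+L.$$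
   Context: For $v:\mathbb{Z}_+\to\mathbb{R}^q$, $v_{[0,T-1]}=\begin{bmatrix}v(0)^\top & \cdots & v(T-1)^\top\end{bmatrix}^\top$. For $k\in[1,T]$ the Hankel matrix of depth $k$ is the $qk\times(T-k+1)$ block matrix $\mathcal{H}_k(v_{[0,T-1]})$ whose $(i,j)$ block ($i\in[0,k-1]$, $j\in[0,T-k]$) is $v(i+j)$; in particular $\mathcal{H}_1(x_{[0,T-L]})=\begin{bmatrix}x(0)&\cdots&x(T-L)\end{bmatrix}$. $\operatorname{spec}A$ denotes the set of (complex) eigenvalues of $A$. *)

(* Real scalars: an arbitrary real closed field R (covers R = the reals);
   complex numbers: R[i] from mathcomp-real-closed. *)
From HB Require Import structures.
From mathcomp Require Import all_boot all_order all_algebra.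
From mathcomp.real_closed Require Import complex.
Set Implicit Arguments. Unset Strict Implicit. Unset Printing Implicit Defensive.
Import Order.TTheory GRing.Theory Num.Theory.
Local Open Scope ring_scope.

Definition hankel (R : Type) (k N : nat) (v : nat -> R) : 'M[R]_(k, N - k + 1) :=
  \matrix_(i < k, j < N - k + 1) v (i + j)%N.

Definition hankel1 (R : Type) (n M : nat) (x : nat -> 'cV[R]_n) : 'M[R]_(n, M) :=
  \matrix_(i < n, j < M) x j i ord0.

Definition cmx (R : rcfType) (n : nat) (A : 'M[R]_n) : 'M[R[i]]_n :=
  map_mx (fun a => a%:C%C) A.

Definition spec (R : rcfType) (n : nat) (A : 'M[R]_n) (lam : R[i]) : Prop :=
  eigenvalue (cmx A) lam.

Definition Lambda (R : rcfType) (d : nat) (eta : 'cV[R]_d) (lam : R[i]) : Prop :=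
  \sum_(i < d) lam ^+ i * (eta i ord0)%:C%C = 0.

From HB Require Import structures.
From mathcomp Require Import all_boot all_order all_algebra.
From mathcomp.real_closed Require Import complex.
From Stdlib Require Import Lia.
From mathcomp Require Import zify.
Set Implicit Arguments.
Unset Strict Implicit.
Unset Printing Implicit Defensive.

Import Order.TTheory GRing.Theory Num.Theory.
Local Open Scope ring_scope.

(** Let p be the polynomial with coefficient vector eta. Since no eigenvalue of
    A is a root of p, p and the characteristic polynomial of A are coprime, so
    p(A) is invertible and the initial state can be chosen to make
    w(t) = sum_i eta_i x(t + i) vanish at t = 0. As
    w(t + 1) = A w(t) + (sum_i eta_i u(t + i)) B and eta annihilates the Hankel
    matrix of u, w vanishes along the whole horizon. Hence eta annihilates every
    window of n + L consecutive columns of the stacked data matrix that stays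
    inside the data. If d is the degree of p, the columns therefore satisfy a
    linear recurrence of order d, so each is a combination of the first d
    columns and of the n + L - 1 - d last columns, which the recurrence does not
    reach: the rank is at most n + L - 1. *)

Lemma sum_coef_wide (R : nzRingType) (V : nmodType) (p : {poly R}) N
    (F : nat -> R -> V) :
  (forall i, F i 0 = 0) -> (size p <= N)%N ->
  \sum_(i < N) F i p`_i = \sum_(i < size p) F i p`_i.
Proof.
move=> F0 le_pN; rewrite (big_ord_widen N (fun i => F i p`_i) le_pN).
rewrite [RHS]big_mkcond /=; apply: eq_bigr => i _.
by case: ifP => // /negbT; rewrite -leqNgt => /(nth_default 0) ->.
Qed.

Lemma poly_mx_unit (F : fieldType) n (A : 'M[F]_n) (p : {poly F}) :
  coprimep p (char_poly A) -> (\sum_(i < size p) p`_i *: A ^+ i) \in unitmx.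
Proof.
case: n A => [|n] A; first by rewrite unitmxE det_mx00 unitr1.
have -> : \sum_(i < size p) p`_i *: A ^+ i = horner_mx A p.
  rewrite -[p in RHS]coefK poly_def rmorph_sum; apply: eq_bigr => i _.
  by rewrite -mul_polyC rmorphM rmorphXn /= horner_mx_C horner_mx_X -mulmxE mul_scalar_mx.
case/Bezout_eq1_coprimepP => -[a b] /= /(congr1 (horner_mx A)).
by rewrite rmorphD !rmorphM /= Cayley_Hamilton mulr0 addr0 rmorph1 => /mulmx1_unit[].
Qed.

Lemma coprimep_char_poly_complex (R : rcfType) n (A : 'M[R]_n) (p : {poly R}) :
  (forall lam, eigenvalue (cmx A) lam -> ~~ root (map_poly (real_complex R) p) lam) ->
  coprimep p (char_poly A).
Proof.
move=> no_common_root.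
rewrite -(coprimep_map (real_complex R)) map_char_poly coprimep_sym.
apply: Pdiv.ClosedField.root_coprimep => lam.
by rewrite -eigenvalue_root_char => /no_common_root.
Qed.

Section StateTrajectory.

Variables (R : comUnitRingType) (n : nat) (A : 'M[R]_n) (B : 'cV[R]_n) (u : nat -> R).

Fixpoint traj (x0 : 'cV_n) (t : nat) : 'cV_n :=
  if t is t'.+1 then A *m traj x0 t' + u t' *: B else x0.

Lemma traj_superposition x0 t : traj x0 t = A ^+ t *m x0 + traj 0 t.
Proof.
elim: t => [|t IH] /=; first by rewrite expr0 mul1mx addr0.
by rewrite IH mulmxDr addrA mulmxA exprS mulmxE.
Qed.

Variable p : {poly R}.

Definition filtered_traj x0 t := \sum_(i < size p) p`_i *: traj x0 (t + i).

Lemma filtered_trajS x0 t :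
  filtered_traj x0 t.+1 =
  A *m filtered_traj x0 t + (\sum_(i < size p) p`_i * u (t + i)%N) *: B.
Proof.
rewrite /filtered_traj mulmx_sumr scaler_suml -big_split.
by apply: eq_bigr => i _; rewrite addSn /= scalerDr scalemxAr scalerA.
Qed.

Lemma filtered_traj0 x0 :
  filtered_traj x0 0 = (\sum_(i < size p) p`_i *: A ^+ i) *m x0 + filtered_traj 0 0.
Proof.
rewrite /filtered_traj mulmx_suml -big_split; apply: eq_bigr => i _.
by rewrite traj_superposition scalerDr scalemxAl.
Qed.

Lemma exists_filtered_traj_eq0 K :
    (\sum_(i < size p) p`_i *: A ^+ i) \in unitmx ->
    (forall t, (t < K)%N -> \sum_(i < size p) p`_i * u (t + i)%N = 0) ->
  exists x0, forall t, (t <= K)%N -> filtered_traj x0 t = 0.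
Proof.
set P := \sum_(i < _) _ => P_unit u_annihilated.
exists (- (invmx P *m filtered_traj 0 0)); elim=> [|t IH] ltK.
  by rewrite filtered_traj0 mulmxN mulmxA mulmxV // mul1mx addNr.
by rewrite filtered_trajS IH ?u_annihilated ?mulmx0 ?scale0r ?addr0 // ltnW.
Qed.

End StateTrajectory.

Section LinearRecurrence.

Variables (F : fieldType) (m : nat) (p : {poly F}) (r : nat -> 'rV[F]_m) (K : nat).
Hypothesis p_neq0 : p != 0.
Hypothesis r_rec : forall t, (t < K)%N -> \sum_(i < size p) p`_i *: r (t + i)%N = 0.

Let d := (size p).-1.

Lemma recurrence_sub N k (S : 'M[F]_(k, m)) :
    (forall j, (j < N)%N -> (j < d)%N || (K + d <= j)%N -> (r j <= S)%MS) ->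
  forall j, (j < N)%N -> (r j <= S)%MS.
Proof.
move=> r_base; elim/ltn_ind=> j IH ltjN.
have [|] := boolP ((j < d) || (K + d <= j))%N; first exact: r_base.
rewrite negb_or -leqNgt -ltnNge => /andP[le_dj ltjKd].
have size_p : size p = d.+1 by rewrite prednK // size_poly_gt0.
have lead_neq0 : p`_d != 0 by rewrite -lead_coefE lead_coef_eq0.
have lt_jd_K : (j - d < K)%N by lia.
have := r_rec lt_jd_K.
rewrite size_p big_ord_recr /= subnK // => /eqP; rewrite addr_eq0 => /eqP r_j.
have -> : r j = - (p`_d)^-1 *: \sum_(i < d) p`_i *: r (j - d + i)%N.
  by rewrite r_j scaleNr scalerN opprK scalerA mulVf // scale1r.
apply/scalemx_sub/summx_sub => i _; apply/scalemx_sub/IH; have := ltn_ord i; lia.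
Qed.

Lemma rank_recurrence N : (\rank (\matrix_(j < N) r j) <= d + (N - (K + d)))%N.
Proof.
pose base := iota 0 d ++ iota (K + d) (N - (K + d)).
pose S := \matrix_(k < size base) r (nth 0%N base k).
have /mxrankS : (\matrix_(j < N) r j <= S)%MS.
  apply/row_subP => j; rewrite rowK; apply: (@recurrence_sub N) => // i ltiN i_base.
  have i_in : i \in base by rewrite mem_cat !mem_iota; lia.
  have idx_lt : (index i base < size base)%N by rewrite index_mem.
  by have := row_sub (Ordinal idx_lt) S; rewrite rowK /= nth_index.
move/leq_trans; apply; apply: leq_trans (rank_leq_row S) _.
by rewrite size_cat !size_iota.
Qed.

End LinearRecurrence.

Definition data_window {R : Type} (L : nat) {n : nat} (u : nat -> R) (x : nat -> 'cV[R]_n)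
    (t : nat) : 'cV[R]_(L + n) :=
  col_mx (\col_(k < L) u (t + k)%N) (x t).

Lemma data_window_comb (R : comNzRingType) (p : {poly R}) L n u (x : nat -> 'cV[R]_n) t :
  \sum_(i < size p) p`_i *: data_window L u x (t + i)%N =
  col_mx (\col_(k < L) \sum_(i < size p) p`_i * u (t + k + i)%N)
         (\sum_(i < size p) p`_i *: x (t + i)%N).
Proof.
rewrite -[LHS]vsubmxK !raddf_sum /=.
under eq_bigr do rewrite linearZ /= col_mxKu.
under [X in col_mx _ X]eq_bigr do rewrite linearZ /= col_mxKd.
congr col_mx; apply/matrixP => k j; rewrite summxE mxE.
by apply: eq_bigr => i _; rewrite !mxE addnAC.
Qed.

Lemma hankel_annihilator (R : comNzRingType) N T (u : nat -> R) (eta : 'cV[R]_N) :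
    eta^T *m hankel N T u = 0 ->
  forall s, (s + N <= T)%N ->
  \sum_(i < size (rVpoly eta^T)) (rVpoly eta^T)`_i * u (s + i)%N = 0.
Proof.
move=> eta_hankel s le_sN_T; have lt_s : (s < T - N + 1)%N by lia.
rewrite -(sum_coef_wide (N := N) (F := fun i c => c * u (s + i)%N)) ?size_poly //; last first.
  by move=> i; rewrite mul0r.
transitivity ((eta^T *m hankel N T u) 0 (Ordinal lt_s)); last by rewrite eta_hankel mxE.
by rewrite mxE; apply: eq_bigr => i _; rewrite coef_rVpoly_ord !mxE addnC.
Qed.

Lemma LambdaP (R : rcfType) N (eta : 'cV[R]_N) lam :
  reflect (Lambda eta lam) (root (map_poly (real_complex R) (rVpoly eta^T)) lam).
Proof.
have size_eta : (size (map_poly (real_complex R) (rVpoly eta^T)) <= N)%N.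
  by rewrite size_map_poly size_poly.
rewrite rootE (horner_coef_wide _ size_eta).
under eq_bigr do rewrite coef_map coef_rVpoly_ord mxE mulrC.
exact: eqP.
Qed.

Lemma tr_hankel_data_mx (R : Type) L T n (u : nat -> R) (x : nat -> 'cV[R]_n) :
  (col_mx (hankel L T u) (hankel1 (T - L + 1) x))^T =
  \matrix_(j < T - L + 1) (data_window L u x j)^T.
Proof.
apply/row_matrixP => j; rewrite rowK -tr_col col_col_mx.
by congr (trmx (col_mx _ _)); apply/matrixP => a b; rewrite !mxE ?(ord1 b) // addnC.
Qed.

Theorem proposition3 (R : rcfType) (n T L : nat) (u : nat -> R)
  (eta : 'cV[R]_(n + L))
  (hL1 : (1 <= L)%N) (hLT : (L <= T)%N) (hnLT : (n + L <= T)%N)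
  (heta0 : eta != 0)
  (heta : eta^T *m hankel (n + L) T u = 0) :
  forall (A : 'M[R]_n) (B : 'cV[R]_n),
    (forall lam : R[i], spec A lam -> ~ Lambda eta lam) ->
    exists x : nat -> 'cV[R]_n,
      (forall t : nat, (t < T - L)%N -> x t.+1 = A *m x t + u t *: B) /\
      (\rank (col_mx (hankel L T u) (hankel1 (T - L + 1) x)) < n + L)%N.
Proof.
move=> A B no_common_root.
set p := rVpoly eta^T.
have p_neq0 : p != 0.
  by apply: contraNneq heta0 => p0; rewrite -[eta]trmxK -[eta^T]rVpolyK -/p p0 linear0 trmx0.
have u_annihilated := hankel_annihilator heta.
have P_unit : (\sum_(i < size p) p`_i *: A ^+ i) \in unitmx.
  apply/poly_mx_unit/coprimep_char_poly_complex => lam /no_common_root not_Lambda.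
  by apply/negP => /LambdaP.
have u_annihilated_early : forall t, (t < T + 1 - (n + L))%N ->
    \sum_(i < size p) p`_i * u (t + i)%N = 0.
  by move=> t lt_t; apply: u_annihilated; lia.
have [x0 x0_filtered] := exists_filtered_traj_eq0 B P_unit u_annihilated_early.
exists (traj A B u x0); split => //.
pose r t := (data_window L u (traj A B u x0) t)^T.
have r_rec : forall t, (t < T + 2 - (n + 2 * L))%N ->
    \sum_(i < size p) p`_i *: r (t + i)%N = 0.
  move=> t lt_t; rewrite /r; under eq_bigr do rewrite -linearZ.
  apply/eqP; rewrite -linear_sum trmx_eq0 data_window_comb col_mx_eq0.
  apply/andP; split; apply/eqP; last first.
    by apply: x0_filtered; lia.
  by apply/matrixP => k j; rewrite !mxE u_annihilated //; have := ltn_ord k; lia.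
rewrite -mxrank_tr tr_hankel_data_mx.
apply: leq_ltn_trans (rank_recurrence p_neq0 r_rec (T - L + 1)) _.
have : (size p <= n + L)%N by apply: size_poly.
set s := size p; lia.
Qed.
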